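(* Let $B$ be a blueprint. Every maximal ideal of $B$ is a prime ideal. If $B$ has a zero, then every maximal congruence on $B$ is a prime congruence.
   Context: A monoid is a commutative semigroup $A$, written multiplicatively, with neutral element $1$. For a monoid $A$, $\mathbb N[A]$ denotes the semiring of finite formal sums $\sum a_i$ of elements $a_i\in A$ (repetitions allowed), with empty sum $\underline0$ and multiplication extended bilinearly from $A$. A pre-addition on $A$ is a relation $\mathcal R\subseteq\mathbb N[A]\times\mathbb N[A]$, written $\sum a_i\equiv\sum b_j$, which is an equivalence relation and satisfies: if $\sum a_i\equiv\sum b_j$ and $\sum c_k\equiv\sum d_l$, then $\sum a_i+\sum c_k\equiv\sum b_j+\sum d_l$ and $\sum_{i,k}a_ic_k\equiv\sum_{j,l}b_jd_l$. A blueprint $B=(A,\mathcal R)$ is a monoid $A$ with a pre-addition $\mathcal R$; we write $a\in B$ for $a\in A$. An element $e$ with $e\equiv\underline0$ is a zero of $B$. $B$ is proper if $a\equiv b$ for $a,b\in A$ implies $a=b$. For an equivalence relation $\sim$ on $A$, its linear extension $\sim_{\mathbb N}$ is the equivalence relation on $\mathbb N[A]$ generated by $\sum_{i=1}^n a_i\sim_{\mathbb N}\sum_{i=1}^n b_i$ whenever $a_i\sim b_i$ for all $i$; $\sim_{\mathcal R}$ is the smallest equivalence relation on $\mathbb N[A]$ containing $\mathcal R$ and $\sim_{\mathbb N}$. A congruence on $B$ is an equivalence relation $\sim$ on $A$ such that (C1) $\sim_{\mathbb N}$ is a pre-addition, and (C2) the restriction of $\sim_{\mathcal R}$ to $A$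 equals $\sim$. The quotient $B/\sim$ has monoid $A/\sim$ and the smallest pre-addition containing all $\sum[a_i]\equiv\sum[b_j]$ with $\sum a_i\equiv\sum b_j$ in $B$. A congruence is proper if it has more than one equivalence class; a maximal congruence is a proper congruence not contained in a strictly larger proper congruence. A blueprint is integral if it is proper, $1\not\equiv\underline0$, and every element is either a zero or integral (multiplication by it is injective on the monoid). A prime congruence is a proper congruence $\sim$ with $B/\sim$ integral. For $I\subseteq B$: $a\sim^I b$ iff $a=b$ or $a,b\in I$; $a\sim_I b$ iff there is a finite sequence $a\equiv\sum_k c_{1,k}\sim^I_{\mathbb N}\sum_k d_{1,k}\equiv\cdots\sim^I_{\mathbb N}\sum_k d_{n,k}\equiv b$ with $c_{i,k},d_{i,k}\in A$. An ideal is a subset $I$ with (I1) $IB\subseteq I$; (I2) every zero of $B$ lies in $I$; (I3) if $a\sim_I b$ and $b\in I$ then $a\in I$. An ideal is proper if $I\neq B$; a maximal ideal is a proper ideal not contained in a strictly larger proper ideal. A prime ideal is an ideal $\mathfrak p$ such that $B\setminus\mathfrak p$ is a submonoid of $A$ (contains $1$, closed under multiplication). *)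

From Stdlib Require Import List Permutation Relations ClassicalEpsilon.
Import ListNotations.


(* Elements of N[A] (finite formal sums) are represented
   by lists; a relation on N[A] is a relation on lists invariant under
   permutation (this invariance is part of [is_preaddition]). *)
Record bp := BP {
  bT : Type;
  bmul : bT -> bT -> bT;
  bone : bT;
  bR : list bT -> list bT -> Prop }.

Definition nprod (T : Type) (mul : T -> T -> T) (s t : list T) : list T :=
  flat_map (fun a => map (fun c => mul a c) t) s.

Definition is_preaddition (T : Type) (mul : T -> T -> T)
  (P : list T -> list T -> Prop) : Prop :=
  (forall s s' t t', Permutation s s' -> Permutation t t' -> P s t -> P s' t')
  /\ (forall s, P s s)
  /\ (forall s t, P s t -> P t s)
  /\ (forall s t u, P s t -> P t u -> P s u)
  /\ (forall s t u v, P s t -> P u v -> P (s ++ u) (t ++ v))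
  /\ (forall s t u v, P s t -> P u v -> P (nprod T mul s u) (nprod T mul t v)).

Definition is_monoid (B : bp) : Prop :=
  (forall a b c, bmul B a (bmul B b c) = bmul B (bmul B a b) c)
  /\ (forall a b, bmul B a b = bmul B b a)
  /\ (forall a, bmul B (bone B) a = a).

Definition is_blueprint (B : bp) : Prop :=
  is_monoid B /\ is_preaddition (bT B) (bmul B) (bR B).

Definition is_zero (B : bp) (e : bT B) : Prop := bR B [e] [].

Definition proper_bp (B : bp) : Prop :=
  forall a b, bR B [a] [b] -> a = b.

Definition integral_elt (B : bp) (a : bT B) : Prop :=
  forall b c, bmul B a b = bmul B a c -> b = c.

Definition integral_bp (B : bp) : Prop :=
  proper_bp B /\ ~ bR B [bone B] [] /\
  forall a, is_zero B a \/ integral_elt B a.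

(* linear extension ~_N: equivalence relation on N[A] generated by
   pointwise relatedness (lists taken up to permutation, i.e. multisets) *)
Definition linN (T : Type) (sim : T -> T -> Prop) : list T -> list T -> Prop :=
  clos_refl_sym_trans (list T)
    (fun s t => Forall2 sim s t \/ Permutation s t).

Definition simR (B : bp) (sim : bT B -> bT B -> Prop) :
  list (bT B) -> list (bT B) -> Prop :=
  clos_refl_sym_trans (list (bT B)) (fun s t => bR B s t \/ linN (bT B) sim s t).

Definition is_congruence (B : bp) (sim : bT B -> bT B -> Prop) : Prop :=
  equivalence (bT B) sim
  /\ is_preaddition (bT B) (bmul B) (linN (bT B) sim)
  /\ (forall a b, simR B sim [a] [b] <-> sim a b).

Definition proper_congruence (B : bp) (sim : bT B -> bT B -> Prop) : Prop :=
  is_congruence B sim /\ exists a b, ~ sim a b.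

Definition maximal_congruence (B : bp) (sim : bT B -> bT B -> Prop) : Prop :=
  proper_congruence B sim /\
  forall sim' : bT B -> bT B -> Prop, proper_congruence B sim' ->
    (forall a b, sim a b -> sim' a b) -> (forall a b, sim' a b -> sim a b).

(* quotient B/~ : classes are the predicates sim a *)
Definition qcarrier (B : bp) (sim : bT B -> bT B -> Prop) : Type :=
  { P : bT B -> Prop | exists a, P = sim a }.

Definition qcls (B : bp) (sim : bT B -> bT B -> Prop) (a : bT B) : qcarrier B sim :=
  exist _ (sim a) (ex_intro _ a eq_refl).

Definition qrep (B : bp) (sim : bT B -> bT B -> Prop) (q : qcarrier B sim) : bT B :=
  proj1_sig (constructive_indefinite_description _ (proj2_sig q)).

Definition qmul (B : bp) (sim : bT B -> bT B -> Prop) (q1 q2 : qcarrier B sim) :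
  qcarrier B sim := qcls B sim (bmul B (qrep B sim q1) (qrep B sim q2)).

(* smallest pre-addition containing all sum [a_i] = sum [b_j] with
   sum a_i = sum b_j in B *)
Definition qR (B : bp) (sim : bT B -> bT B -> Prop) (s t : list (qcarrier B sim))
  : Prop :=
  forall P : list (qcarrier B sim) -> list (qcarrier B sim) -> Prop,
    is_preaddition (qcarrier B sim) (qmul B sim) P ->
    (forall u v, bR B u v -> P (map (qcls B sim) u) (map (qcls B sim) v)) ->
    P s t.

Definition quotient_bp (B : bp) (sim : bT B -> bT B -> Prop) : bp :=
  BP (qcarrier B sim) (qmul B sim) (qcls B sim (bone B)) (qR B sim).

Definition prime_congruence (B : bp) (sim : bT B -> bT B -> Prop) : Prop :=
  proper_congruence B sim /\ integral_bp (quotient_bp B sim).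

Definition simI_up (B : bp) (I : bT B -> Prop) (a b : bT B) : Prop :=
  a = b \/ (I a /\ I b).

(* a ~_I b : a = sum c_1 ~^I_N sum d_1 = sum c_2 ~^I_N ... ~^I_N sum d_n = b *)
Definition simI_low (B : bp) (I : bT B -> Prop) (a b : bT B) : Prop :=
  exists (n : nat) (c d : nat -> list (bT B)),
    0 < n /\
    bR B [a] (c 0) /\
    (forall i, i < n -> linN (bT B) (simI_up B I) (c i) (d i)) /\
    (forall i, S i < n -> bR B (d i) (c (S i))) /\
    bR B (d (pred n)) [b].

Definition is_ideal (B : bp) (I : bT B -> Prop) : Prop :=
  (forall a b, I a -> I (bmul B a b))
  /\ (forall e, is_zero B e -> I e)
  /\ (forall a b, simI_low B I a b -> I b -> I a).

Definition proper_ideal (B : bp) (I : bT B -> Prop) : Prop :=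
  is_ideal B I /\ exists a, ~ I a.

Definition maximal_ideal (B : bp) (I : bT B -> Prop) : Prop :=
  proper_ideal B I /\
  forall J : bT B -> Prop, proper_ideal B J ->
    (forall a, I a -> J a) -> (forall a, J a -> I a).

Definition prime_ideal (B : bp) (p : bT B -> Prop) : Prop :=
  is_ideal B p /\ ~ p (bone B) /\
  (forall a b, ~ p a -> ~ p b -> ~ p (bmul B a b)).

(* Both parts rest on colon constructions.  For an ideal I and a ∉ I, the set
   (I : a) = {x | a x ∈ I} is again an ideal containing I, and it is proper
   because 1 ∉ (I : a); for maximal I it equals I, so a b ∈ I forces b ∈ I.
   For a congruence ~ and an element a, b ~_a c :⇔ a b ~ a c is again a
   congruence containing ~.  If ~ is maximal, either ~_a is improper, so that
   a·1 ~ a·e for a zero e and the class of a is a zero of B/~, or ~_a = ~,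
   which says exactly that the class of a is integral. *)

From Stdlib Require Import List Permutation Relations ClassicalEpsilon Classical
  FunctionalExtensionality PropExtensionality ProofIrrelevance.
Import ListNotations.

Lemma nprod_singleton_l T mul a s : nprod T mul [a] s = map (mul a) s.
Proof. unfold nprod; simpl. now rewrite app_nil_r. Qed.

Lemma Permutation_nprod_l T mul s s' u :
  Permutation s s' -> Permutation (nprod T mul s u) (nprod T mul s' u).
Proof.
  unfold nprod; induction 1; simpl; auto.
  - now apply Permutation_app_head.
  - rewrite !app_assoc. apply Permutation_app_tail, Permutation_app_comm.
  - eapply Permutation_trans; eauto.
Qed.

Lemma Permutation_nprod_r T mul s u u' :
  Permutation u u' -> Permutation (nprod T mul s u) (nprod T mul s u').
Proof.
  intro H; unfold nprod; induction s; simpl; auto.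
  apply Permutation_app; auto. now apply Permutation_map.
Qed.

Lemma Forall2_nprod_l T mul (R : T -> T -> Prop) s s' u :
  (forall a b c, R a b -> R (mul a c) (mul b c)) ->
  Forall2 R s s' -> Forall2 R (nprod T mul s u) (nprod T mul s' u).
Proof.
  intros HR H; unfold nprod; induction H; simpl; auto.
  apply Forall2_app; auto. clear -HR H. induction u; simpl; auto.
Qed.

Lemma Forall2_nprod_r T mul (R : T -> T -> Prop) s u u' :
  (forall a b c, R a b -> R (mul c a) (mul c b)) ->
  Forall2 R u u' -> Forall2 R (nprod T mul s u) (nprod T mul s u').
Proof.
  intros HR H; unfold nprod; induction s; simpl; auto.
  apply Forall2_app; auto. clear -HR H. induction H; simpl; auto.
Qed.

Lemma Forall2_diag T (R : T -> T -> Prop) s : (forall x, R x x) -> Forall2 R s s.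
Proof. intro H; induction s; auto. Qed.

Lemma clos_rst_map (A B : Type) (R : A -> A -> Prop) (R' : B -> B -> Prop) (g : A -> B) :
  (forall x y, R x y -> clos_refl_sym_trans B R' (g x) (g y)) ->
  forall x y, clos_refl_sym_trans A R x y -> clos_refl_sym_trans B R' (g x) (g y).
Proof.
  intros H x y Hxy; induction Hxy.
  - auto.
  - apply rst_refl.
  - now apply rst_sym.
  - eapply rst_trans; eauto.
Qed.

Lemma clos_rst_congr2 (A : Type) (R : A -> A -> Prop) (f : A -> A -> A) :
  (forall x y z, R x y -> clos_refl_sym_trans A R (f x z) (f y z)) ->
  (forall x y z, R x y -> clos_refl_sym_trans A R (f z x) (f z y)) ->
  forall x y u v, clos_refl_sym_trans A R x y -> clos_refl_sym_trans A R u v ->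
    clos_refl_sym_trans A R (f x u) (f y v).
Proof.
  intros Hl Hr x y u v Hxy Huv. apply rst_trans with (f y u).
  - apply (clos_rst_map _ _ R R (fun w => f w u)); auto.
  - apply (clos_rst_map _ _ R R (fun w => f y w)); auto.
Qed.

Lemma preaddition_scale T mul (P : list T -> list T -> Prop) a s t :
  is_preaddition T mul P -> P s t -> P (map (mul a) s) (map (mul a) t).
Proof.
  intros (_ & Pr & _ & _ & _ & Pm) H.
  rewrite <- !nprod_singleton_l. now apply Pm.
Qed.

Lemma linN_map T (R R' : T -> T -> Prop) f s t :
  (forall x y, R x y -> R' (f x) (f y)) ->
  linN T R s t -> linN T R' (map f s) (map f t).
Proof.
  intro H. apply clos_rst_map. intros x y [Hxy | Hxy]; apply rst_step.
  - left. induction Hxy; simpl; auto.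
  - right. now apply Permutation_map.
Qed.

Lemma linN_preaddition T mul (sim : T -> T -> Prop) :
  (forall x, sim x x) ->
  (forall a b c, sim a b -> sim (mul a c) (mul b c)) ->
  (forall a b c, sim a b -> sim (mul c a) (mul c b)) ->
  is_preaddition T mul (linN T sim).
Proof.
  intros Hrefl Hl Hr. unfold linN.
  split; [|split; [|split; [|split; [|split]]]].
  - intros s s' t t' Hs Ht H. apply rst_trans with s.
    { apply rst_sym, rst_step; now right. }
    apply rst_trans with t; auto. apply rst_step; now right.
  - intros; apply rst_refl.
  - intros; now apply rst_sym.
  - intros; eapply rst_trans; eauto.
  - apply clos_rst_congr2; intros x y z [H | H]; apply rst_step.
    + left; apply Forall2_app; auto using Forall2_diag.
    + right; now apply Permutation_app_tail.
    + left; apply Forall2_app; auto using Forall2_diag.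
    + right; now apply Permutation_app_head.
  - apply clos_rst_congr2; intros x y z [H | H]; apply rst_step.
    + left; now apply Forall2_nprod_l.
    + right; now apply Permutation_nprod_l.
    + left; now apply Forall2_nprod_r.
    + right; now apply Permutation_nprod_r.
Qed.

Lemma preaddition_union T mul (P1 P2 : list T -> list T -> Prop) :
  is_preaddition T mul P1 -> is_preaddition T mul P2 ->
  is_preaddition T mul (clos_refl_sym_trans _ (fun s t => P1 s t \/ P2 s t)).
Proof.
  intros (p1 & r1 & _ & _ & a1 & m1) (p2 & r2 & _ & _ & a2 & m2).
  split; [|split; [|split; [|split; [|split]]]].
  - intros s s' t t' Hs Ht H. apply rst_trans with s.
    { apply rst_step; left. now apply (p1 s s' s s). }
    apply rst_trans with t; auto. apply rst_step; left. now apply (p1 t t t t').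
  - intros; apply rst_refl.
  - intros; now apply rst_sym.
  - intros; eapply rst_trans; eauto.
  - apply clos_rst_congr2; intros x y z [H | H]; apply rst_step; auto.
  - apply clos_rst_congr2; intros x y z [H | H]; apply rst_step; auto.
Qed.

Section Blueprint.

Variable B : bp.
Hypothesis HB : is_blueprint B.

Notation mul := (bmul B).
Notation one := (bone B).

Lemma bmulA a b c : mul a (mul b c) = mul (mul a b) c.
Proof. apply HB. Qed.

Lemma bmulC a b : mul a b = mul b a.
Proof. apply HB. Qed.

Lemma bmul1 a : mul one a = a.
Proof. apply HB. Qed.

Lemma bmulr1 a : mul a one = a.
Proof. rewrite bmulC; apply bmul1. Qed.

Lemma bR_preaddition : is_preaddition (bT B) mul (bR B).
Proof. apply HB. Qed.

Lemma bR_scale a s t : bR B s t -> bR B (map (mul a) s) (map (mul a) t).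
Proof. apply preaddition_scale, bR_preaddition. Qed.

Lemma is_zero_mul a e : is_zero B e -> is_zero B (mul a e).
Proof. apply (bR_scale a [e] []). Qed.

Definition colon_ideal (I : bT B -> Prop) (a : bT B) : bT B -> Prop :=
  fun x => I (mul a x).

Lemma simI_low_colon I a x y :
  simI_low B (colon_ideal I a) x y -> simI_low B I (mul a x) (mul a y).
Proof.
  intros (n & c & d & Hn & Hfirst & Hlin & Hlink & Hlast).
  exists n, (fun i => map (mul a) (c i)), (fun i => map (mul a) (d i)).
  split; [exact Hn|split; [|split; [|split]]].
  - exact (bR_scale a [x] (c 0) Hfirst).
  - intros i Hi. apply linN_map with (R := simI_up B (colon_ideal I a)); auto.
    intros u v [-> | [Hu Hv]]; [now left | now right].
  - intros i Hi. now apply bR_scale, Hlink.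
  - exact (bR_scale a (d (pred n)) [y] Hlast).
Qed.

Lemma is_ideal_colon I a : is_ideal B I -> is_ideal B (colon_ideal I a).
Proof.
  intros (I1 & I2 & I3). unfold colon_ideal. split; [|split].
  - intros x y Hx. rewrite bmulA. now apply I1.
  - intros e He. now apply I2, is_zero_mul.
  - intros x y Hxy Hy. apply (I3 _ (mul a y)); auto. now apply simI_low_colon.
Qed.

Lemma proper_ideal_one_notin I : proper_ideal B I -> ~ I one.
Proof.
  intros [[I1 _] [a Ha]] H1. apply Ha. rewrite <- (bmul1 a). now apply I1.
Qed.

Lemma maximal_ideal_prime I : maximal_ideal B I -> prime_ideal B I.
Proof.
  intros [HI Hmax]. pose proof HI as [[I1 _] _].
  split; [apply HI | split; [now apply proper_ideal_one_notin|]].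
  intros a b Ha Hb Hab.
  assert (Hcolon : proper_ideal B (colon_ideal I a)).
  { split; [now apply is_ideal_colon, HI|].
    exists one. unfold colon_ideal. now rewrite bmulr1. }
  apply Hb, (Hmax _ Hcolon); auto.
  intros x Hx. unfold colon_ideal. rewrite bmulC. now apply I1.
Qed.

Section Congruence.

Variable sim : bT B -> bT B -> Prop.
Hypothesis Hsim : is_congruence B sim.

Lemma cong_refl a : sim a a.
Proof. apply (equiv_refl _ _ (proj1 Hsim)). Qed.

Lemma cong_sym a b : sim a b -> sim b a.
Proof. apply (equiv_sym _ _ (proj1 Hsim)). Qed.

Lemma cong_trans a b c : sim a b -> sim b c -> sim a c.
Proof. apply (equiv_trans _ _ (proj1 Hsim)). Qed.

Lemma simR_preaddition : is_preaddition (bT B) mul (simR B sim).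
Proof. apply preaddition_union; [apply bR_preaddition | apply Hsim]. Qed.

Lemma simR_Forall2 s t : Forall2 sim s t -> simR B sim s t.
Proof. intro H. apply rst_step; right; apply rst_step; now left. Qed.

Lemma simR_singleton a b : simR B sim [a] [b] -> sim a b.
Proof. apply Hsim. Qed.

Lemma cong_mul_l a b c : sim a b -> sim (mul c a) (mul c b).
Proof.
  intro H. apply simR_singleton.
  apply (preaddition_scale _ _ _ c [a] [b] simR_preaddition).
  apply simR_Forall2; auto.
Qed.

Lemma cong_mul_r a b c : sim a b -> sim (mul a c) (mul b c).
Proof. rewrite (bmulC a), (bmulC b). apply cong_mul_l. Qed.

Definition colon_congruence (a : bT B) : bT B -> bT B -> Prop :=
  fun b c => sim (mul a b) (mul a c).

Lemma simR_colon a s t :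
  simR B (colon_congruence a) s t -> simR B sim (map (mul a) s) (map (mul a) t).
Proof.
  apply clos_rst_map. intros u v [H | H]; apply rst_step.
  - left. now apply bR_scale.
  - right. now apply linN_map with (R := colon_congruence a).
Qed.

Lemma is_congruence_colon a : is_congruence B (colon_congruence a).
Proof.
  unfold colon_congruence. split; [|split].
  - split; red; eauto using cong_refl, cong_sym, cong_trans.
  - apply linN_preaddition.
    + intro; apply cong_refl.
    + intros u v w H. rewrite !bmulA. now apply cong_mul_r.
    + intros u v w H. rewrite (bmulC w u), (bmulC w v), !bmulA. now apply cong_mul_r.
  - intros u v; split; intro H.
    + apply simR_singleton. exact (simR_colon a [u] [v] H).
    + apply rst_step; right; apply rst_step; left; auto.
Qed.

Lemma qrep_spec (q : qcarrier B sim) : proj1_sig q = sim (qrep B sim q).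
Proof.
  unfold qrep. now destruct (constructive_indefinite_description _ _) as [a Ha].
Qed.

Lemma qcls_qrep q : qcls B sim (qrep B sim q) = q.
Proof.
  pose proof (qrep_spec q) as H. destruct q as [P HP]; simpl in H.
  apply subset_eq_compat. now symmetry.
Qed.

Lemma qcls_eq a b : sim a b -> qcls B sim a = qcls B sim b.
Proof.
  intro H. apply subset_eq_compat, functional_extensionality; intro x.
  apply propositional_extensionality; split; eauto using cong_sym, cong_trans.
Qed.

Lemma qcls_inj a b : qcls B sim a = qcls B sim b -> sim a b.
Proof.
  intro H. apply (f_equal (@proj1_sig _ _)) in H; simpl in H.
  rewrite H. apply cong_refl.
Qed.

Lemma qrep_qcls a : sim (qrep B sim (qcls B sim a)) a.
Proof. rewrite <- (qrep_spec (qcls B sim a)). apply cong_refl. Qed.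

Lemma Forall2_qrep_qcls s : Forall2 sim (map (qrep B sim) (map (qcls B sim) s)) s.
Proof. induction s; simpl; constructor; auto. apply qrep_qcls. Qed.

Lemma Forall2_qrep_nprod s u :
  Forall2 sim (map (qrep B sim) (nprod _ (qmul B sim) s u))
              (nprod _ mul (map (qrep B sim) s) (map (qrep B sim) u)).
Proof.
  unfold nprod. induction s as [|q s IH]; simpl; auto.
  rewrite map_app. apply Forall2_app; auto. clear IH.
  induction u; simpl; constructor; auto. apply qrep_qcls.
Qed.

(* The relations of B/~ are the least pre-addition generated by those of B,
   so they are bounded by the pre-addition ~_R read through representatives. *)
Lemma qR_simR s t :
  qR B sim s t -> simR B sim (map (qrep B sim) s) (map (qrep B sim) t).
Proof.
  pose proof simR_preaddition as (Qp & Qr & Qs & Qt & Qa & Qm).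
  intro H. apply H.
  - split; [|split; [|split; [|split; [|split]]]].
    + intros s0 s' t0 t' Hs Ht. apply Qp; now apply Permutation_map.
    + intros; apply Qr.
    + intros; now apply Qs.
    + intros; eapply Qt; eauto.
    + intros s0 t0 u v H1 H2. rewrite !map_app. now apply Qa.
    + intros s0 t0 u v H1 H2.
      apply Qt with (nprod _ mul (map (qrep B sim) s0) (map (qrep B sim) u)).
      { apply simR_Forall2, Forall2_qrep_nprod. }
      apply Qt with (nprod _ mul (map (qrep B sim) t0) (map (qrep B sim) v)); auto.
      apply Qs, simR_Forall2, Forall2_qrep_nprod.
  - intros u v Huv. rewrite !map_map.
    apply Qt with u; [rewrite <- map_map; apply simR_Forall2, Forall2_qrep_qcls|].
    apply Qt with v; [apply rst_step; now left|].
    apply Qs. rewrite <- map_map. apply simR_Forall2, Forall2_qrep_qcls.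
Qed.

Lemma quotient_proper : proper_bp (quotient_bp B sim).
Proof.
  intros x y H. apply qR_simR, simR_singleton in H.
  rewrite <- (qcls_qrep x), <- (qcls_qrep y). now apply qcls_eq.
Qed.

(* If 1 ≡ 0 then a ≡ 0 for every a, and all elements become equivalent
   through the empty sum. *)
Lemma quotient_one_not_zero :
  (exists a b, ~ sim a b) -> ~ bR (quotient_bp B sim) [bone (quotient_bp B sim)] [].
Proof.
  pose proof simR_preaddition as (_ & _ & Qs & Qt & _ & _).
  intros (a & b & Hab) H. apply qR_simR in H; simpl in H.
  assert (H1 : simR B sim [one] []).
  { apply Qt with [qrep B sim (qcls B sim one)]; auto.
    apply simR_Forall2. constructor; auto using cong_sym, qrep_qcls. }
  assert (Hnull : forall x, simR B sim [x] []).
  { intro x. pose proof (preaddition_scale _ _ _ x _ _ simR_preaddition H1) as Hx.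
    simpl in Hx. now rewrite bmulr1 in Hx. }
  apply Hab, simR_singleton. apply Qt with []; auto.
Qed.

Lemma is_zero_qcls e : is_zero B e -> is_zero (quotient_bp B sim) (qcls B sim e).
Proof. intros He P _ Hgen. exact (Hgen [e] [] He). Qed.

Lemma quotient_integral_elt q :
  (forall b c, colon_congruence (qrep B sim q) b c -> sim b c) ->
  integral_elt (quotient_bp B sim) q.
Proof.
  intros Hcolon y z Hyz. simpl in Hyz; unfold qmul in Hyz.
  apply qcls_inj, Hcolon in Hyz.
  rewrite <- (qcls_qrep y), <- (qcls_qrep z). now apply qcls_eq.
Qed.

Lemma quotient_zero_elt q e :
  is_zero B e -> sim (qrep B sim q) (mul (qrep B sim q) e) ->
  is_zero (quotient_bp B sim) q.
Proof.
  intros He Hq. rewrite <- (qcls_qrep q), (qcls_eq _ _ Hq).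
  now apply is_zero_qcls, is_zero_mul.
Qed.

End Congruence.

Lemma maximal_congruence_prime sim e :
  is_zero B e -> maximal_congruence B sim -> prime_congruence B sim.
Proof.
  intros He [[Hsim Hproper] Hmax].
  split; [now split|]. split; [|split].
  - now apply quotient_proper.
  - now apply quotient_one_not_zero.
  - intro q. set (a := qrep B sim q).
    destruct (classic (exists b c, ~ colon_congruence sim a b c)) as [Hex | Hall].
    + right. apply quotient_integral_elt; auto.
      apply Hmax; [split; [now apply is_congruence_colon | exact Hex]|].
      intros b c. now apply cong_mul_l.
    + left. apply (quotient_zero_elt sim Hsim q e He).
      fold a. rewrite <- (bmulr1 a) at 1. apply NNPP. intro Hn. apply Hall. eauto.
Qed.

End Blueprint.

Theorem mainTheorem15 (B : bp) (HB : is_blueprint B) :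
  (forall I : bT B -> Prop, maximal_ideal B I -> prime_ideal B I) /\
  ((exists e : bT B, is_zero B e) ->
   forall sim : bT B -> bT B -> Prop,
     maximal_congruence B sim -> prime_congruence B sim).
Proof.
  split.
  - now apply maximal_ideal_prime.
  - intros [e He] sim. now apply maximal_congruence_prime with e.
Qed.
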